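(* Every bigroupoid $\mathcal B$ has a path object: the diagonal morphism $\Delta:\mathcal B\to\mathcal B\times\mathcal B$ factors as $\Delta=\langle S,T\rangle\circ R$ with $R:\mathcal B\to\mathcal P\mathcal B$ a weak equivalence and $\langle S,T\rangle:\mathcal P\mathcal B\to\mathcal B\times\mathcal B$ a fibration.
   Context: A bigroupoid $\mathcal B$ consists of: a set $\mathcal B_0$ of 0-cells; for each $A,B\in\mathcal B_0$ a groupoid $\mathcal B(A,B)$ whose objects are 1-cells and whose arrows are 2-cells; composition functors $*$; identity 1-cells $1_A$; inversion functors $(-)^*$; and natural isomorphisms $\mathbf a:(h*g)*f\Rightarrow h*(g*f)$, $\mathbf l:1_B*f\Rightarrow f$, $\mathbf r:f*1_A\Rightarrow f$, $\mathbf e:f^**f\Rightarrow 1_A$, $\mathbf i:1_B\Rightarrow f*f^*$, such that the pentagon for $\mathbf a$ commutes, $(\mathrm{id}*\mathbf l)\circ\mathbf a=\mathbf r*\mathrm{id}$, and $\mathbf r_f\circ(\mathrm{id}*\mathbf e_f)\circ\mathbf a\circ(\mathbf i_f*\mathrm{id})=\mathbf l_f$. A morphism $(F,\phi):\mathcal A\to\mathcal B$ consists of a function on 0-cells, functors $F_{A,A'}:\mathcal A(A,A')\to\mathcal B(FA,FA')$ and natural isomorphisms $\phi_{g,f}:Fg*Ff\Rightarrow F(g*f)$, $\phi_A:1_{FA}\Rightarrow F1_A$, $\phi_f:(Ff)^*\Rightarrow F(f^* )$ satisfying $F\mathbf a\circ\phi\circ(\phi*\mathrm{id})=\phi\circ(\mathrm{id}*\phi)\circ\mathbf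 a$, $F\mathbf r\circ\phi\circ(\mathrm{id}*\phi_A)=\mathbf r$, $F\mathbf l\circ\phi\circ(\phi_B*\mathrm{id})=\mathbf l$, $F\mathbf e\circ\phi\circ(\phi_f*\mathrm{id})=\phi_A\circ\mathbf e$, $F\mathbf i\circ\phi_B=\phi\circ(\mathrm{id}*\phi_f)\circ\mathbf i$. The product $\mathcal B\times\mathcal B$ is formed componentwise (0-cells, hom-groupoids and all structure taken as products), and $\Delta$ is the strict diagonal morphism. Fibration: (1) for every 0-cell $A'$ of $\mathcal A$ and 1-cell $b:B\to FA'$ there is $a:A\to A'$ with $FA=B$, $Fa=b$; (2) for every 1-cell $a'$ and 2-cell $\beta:b\Rightarrow Fa'$ there is $\alpha:a\Rightarrow a'$ with $Fa=b$, $F\alpha=\beta$. Weak equivalence: every 0-cell $B$ of the codomain admits a 1-cell $B\to FA'$ for some 0-cell $A'$, and each $F_{A,A'}$ is an equivalence of categories. *)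

(* The hom-groupoid B(A,A') has objects  C1 A A'  (1-cells)
   and arrows  C2 f g  (2-cells), with vertical composition  vcomp,
   identities  id2  and inverses  vinv.  The composition functor is
   (comp1, hcomp), the inversion functor is (inv1, inv2). *)
Record Bigroupoid := mkBigroupoid {
  C0 : Type;
  C1 : C0 -> C0 -> Type;
  C2 : forall {A A' : C0}, C1 A A' -> C1 A A' -> Type;
  vcomp : forall {A A'} {f g h : C1 A A'}, C2 g h -> C2 f g -> C2 f h;
  id2 : forall {A A'} (f : C1 A A'), C2 f f;
  vinv : forall {A A'} {f g : C1 A A'}, C2 f g -> C2 g f;
  vassoc : forall A A' (f g h k : C1 A A') (c : C2 h k) (b : C2 g h) (a : C2 f g),
      vcomp c (vcomp b a) = vcomp (vcomp c b) a;
  vid_l : forall A A' (f g : C1 A A') (a : C2 f g), vcomp (id2 g) a = a;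
  vid_r : forall A A' (f g : C1 A A') (a : C2 f g), vcomp a (id2 f) = a;
  vinv_l : forall A A' (f g : C1 A A') (a : C2 f g), vcomp (vinv a) a = id2 f;
  vinv_r : forall A A' (f g : C1 A A') (a : C2 f g), vcomp a (vinv a) = id2 g;
  comp1 : forall {A A' A''}, C1 A' A'' -> C1 A A' -> C1 A A'';
  hcomp : forall {A A' A''} {g g' : C1 A' A''} {f f' : C1 A A'},
      C2 g g' -> C2 f f' -> C2 (comp1 g f) (comp1 g' f');
  hcomp_id : forall A A' A'' (g : C1 A' A'') (f : C1 A A'),
      hcomp (id2 g) (id2 f) = id2 (comp1 g f);
  hcomp_vcomp : forall A A' A'' (g g' g'' : C1 A' A'') (f f' f'' : C1 A A')
      (b' : C2 g' g'') (b : C2 g g') (a' : C2 f' f'') (a : C2 f f'),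
      hcomp (vcomp b' b) (vcomp a' a) = vcomp (hcomp b' a') (hcomp b a);
  unit1 : forall A, C1 A A;
  inv1 : forall {A A'}, C1 A A' -> C1 A' A;
  inv2 : forall {A A'} {f g : C1 A A'}, C2 f g -> C2 (inv1 f) (inv1 g);
  inv2_id : forall A A' (f : C1 A A'), inv2 (id2 f) = id2 (inv1 f);
  inv2_vcomp : forall A A' (f g h : C1 A A') (b : C2 g h) (a : C2 f g),
      inv2 (vcomp b a) = vcomp (inv2 b) (inv2 a);
  ass : forall {A A' A'' A'''} (h : C1 A'' A''') (g : C1 A' A'') (f : C1 A A'),
      C2 (comp1 (comp1 h g) f) (comp1 h (comp1 g f));
  ass_nat : forall A A' A'' A''' (h h' : C1 A'' A''') (g g' : C1 A' A'')
      (f f' : C1 A A') (c : C2 h h') (b : C2 g g') (a : C2 f f'),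
      vcomp (ass h' g' f') (hcomp (hcomp c b) a)
      = vcomp (hcomp c (hcomp b a)) (ass h g f);
  lun : forall {A A'} (f : C1 A A'), C2 (comp1 (unit1 A') f) f;
  lun_nat : forall A A' (f f' : C1 A A') (a : C2 f f'),
      vcomp (lun f') (hcomp (id2 (unit1 A')) a) = vcomp a (lun f);
  run : forall {A A'} (f : C1 A A'), C2 (comp1 f (unit1 A)) f;
  run_nat : forall A A' (f f' : C1 A A') (a : C2 f f'),
      vcomp (run f') (hcomp a (id2 (unit1 A))) = vcomp a (run f);
  ev : forall {A A'} (f : C1 A A'), C2 (comp1 (inv1 f) f) (unit1 A);
  ev_nat : forall A A' (f f' : C1 A A') (a : C2 f f'),
      vcomp (ev f') (hcomp (inv2 a) a) = ev f;
  coev : forall {A A'} (f : C1 A A'), C2 (unit1 A') (comp1 f (inv1 f));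
  coev_nat : forall A A' (f f' : C1 A A') (a : C2 f f'),
      coev f' = vcomp (hcomp a (inv2 a)) (coev f);
  pentagon : forall A A' A'' A''' A'''' (k : C1 A''' A'''') (h : C1 A'' A''')
      (g : C1 A' A'') (f : C1 A A'),
      vcomp (ass k h (comp1 g f)) (ass (comp1 k h) g f)
      = vcomp (hcomp (id2 k) (ass h g f))
          (vcomp (ass k (comp1 h g) f) (hcomp (ass k h g) (id2 f)));
  triangle : forall A A' A'' (g : C1 A' A'') (f : C1 A A'),
      vcomp (hcomp (id2 g) (lun f)) (ass g (unit1 A') f) = hcomp (run g) (id2 f);
  ev_coev : forall A A' (f : C1 A A'),
      vcomp (run f) (vcomp (hcomp (id2 f) (ev f))
        (vcomp (ass f (inv1 f) f) (hcomp (coev f) (id2 f)))) = lun f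
}.

Arguments C0 : clear implicits.
Arguments C1 {_} _ _.
Arguments C2 {_ _ _} _ _.
Arguments vcomp {_ _ _ _ _ _} _ _.
Arguments id2 {_ _ _} _.
Arguments vinv {_ _ _ _ _} _.
Arguments comp1 {_ _ _ _} _ _.
Arguments hcomp {_ _ _ _ _ _ _ _} _ _.
Arguments unit1 {_} _.
Arguments inv1 {_ _ _} _.
Arguments inv2 {_ _ _ _ _} _.
Arguments ass {_ _ _ _ _} _ _ _.
Arguments lun {_ _ _} _.
Arguments run {_ _ _} _.
Arguments ev {_ _ _} _.
Arguments coev {_ _ _} _.

(* Morphisms (F, phi) : B -> C.  Data and axioms are split so that the
   composite is computed on data. *)
Record MorphData (B C : Bigroupoid) := mkMorphData {
  F0 : C0 B -> C0 C;
  F1 : forall {A A'}, @C1 B A A' -> C1 (F0 A) (F0 A');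
  F2 : forall {A A'} {f g : @C1 B A A'}, C2 f g -> C2 (F1 f) (F1 g);
  phc : forall {A A' A''} (g : @C1 B A' A'') (f : C1 A A'),
      C2 (comp1 (F1 g) (F1 f)) (F1 (comp1 g f));
  phu : forall A : C0 B, C2 (unit1 (F0 A)) (F1 (unit1 A));
  phi : forall {A A'} (f : @C1 B A A'), C2 (inv1 (F1 f)) (F1 (inv1 f))
}.
Arguments mkMorphData {B C}.
Arguments F0 {B C} _ _.
Arguments F1 {B C} _ {_ _} _.
Arguments F2 {B C} _ {_ _ _ _} _.
Arguments phc {B C} _ {_ _ _} _ _.
Arguments phu {B C} _ _.
Arguments phi {B C} _ {_ _} _.

Record IsMorph {B C : Bigroupoid} (F : MorphData B C) : Prop := {
  F2_id : forall A A' (f : @C1 B A A'), F2 F (id2 f) = id2 (F1 F f);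
  F2_vcomp : forall A A' (f g h : @C1 B A A') (b : C2 g h) (a : C2 f g),
      F2 F (vcomp b a) = vcomp (F2 F b) (F2 F a);
  (* naturality of phi_{g,f} and phi_f  (phi_A is between constant functors) *)
  phc_nat : forall A A' A'' (g g' : @C1 B A' A'') (f f' : C1 A A')
      (b : C2 g g') (a : C2 f f'),
      vcomp (phc F g' f') (hcomp (F2 F b) (F2 F a))
      = vcomp (F2 F (hcomp b a)) (phc F g f);
  phi_nat : forall A A' (f f' : @C1 B A A') (a : C2 f f'),
      vcomp (phi F f') (inv2 (F2 F a)) = vcomp (F2 F (inv2 a)) (phi F f);
  coh_ass : forall A A' A'' A''' (h : @C1 B A'' A''') (g : C1 A' A'') (f : C1 A A'),
      vcomp (F2 F (ass h g f))
        (vcomp (phc F (comp1 h g) f) (hcomp (phc F h g) (id2 (F1 F f))))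
      = vcomp (phc F h (comp1 g f))
          (vcomp (hcomp (id2 (F1 F h)) (phc F g f)) (ass (F1 F h) (F1 F g) (F1 F f)));
  coh_run : forall A A' (f : @C1 B A A'),
      vcomp (F2 F (run f))
        (vcomp (phc F f (unit1 A)) (hcomp (id2 (F1 F f)) (phu F A)))
      = run (F1 F f);
  coh_lun : forall A A' (f : @C1 B A A'),
      vcomp (F2 F (lun f))
        (vcomp (phc F (unit1 A') f) (hcomp (phu F A') (id2 (F1 F f))))
      = lun (F1 F f);
  coh_ev : forall A A' (f : @C1 B A A'),
      vcomp (F2 F (ev f))
        (vcomp (phc F (inv1 f) f) (hcomp (phi F f) (id2 (F1 F f))))
      = vcomp (phu F A) (ev (F1 F f));
  coh_coev : forall A A' (f : @C1 B A A'),
      vcomp (F2 F (coev f)) (phu F A')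
      = vcomp (phc F f (inv1 f))
          (vcomp (hcomp (id2 (F1 F f)) (phi F f)) (coev (F1 F f)))
}.

Record Morph (B C : Bigroupoid) := mkMorph {
  mdata :> MorphData B C;
  mlaws : IsMorph mdata
}.
Arguments mkMorph {B C}.
Arguments mdata {B C} _.
Arguments mlaws {B C} _.

Definition mcomp_data {B C D : Bigroupoid} (G : MorphData C D) (F : MorphData B C)
  : MorphData B D :=
  mkMorphData (fun A => F0 G (F0 F A))
    (fun A A' f => F1 G (F1 F f))
    (fun A A' f g a => F2 G (F2 F a))
    (fun A A' A'' g f => vcomp (F2 G (phc F g f)) (phc G (F1 F g) (F1 F f)))
    (fun A => vcomp (F2 G (phu F A)) (phu G (F0 F A)))
    (fun A A' f => vcomp (F2 G (phi F f)) (phi G (F1 F f))).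


Arguments vassoc {_ _ _ _ _ _ _} _ _ _.
Arguments vid_l {_ _ _ _ _} _.
Arguments vid_r {_ _ _ _ _} _.
Arguments vinv_l {_ _ _ _ _} _.
Arguments vinv_r {_ _ _ _ _} _.
Arguments hcomp_id {_ _ _ _} _ _.
Arguments hcomp_vcomp {_ _ _ _ _ _ _ _ _ _} _ _ _ _.
Arguments inv2_id {_ _ _} _.
Arguments inv2_vcomp {_ _ _ _ _ _} _ _.
Arguments ass_nat {_ _ _ _ _ _ _ _ _ _ _} _ _ _.
Arguments lun_nat {_ _ _ _ _} _.
Arguments run_nat {_ _ _ _ _} _.
Arguments ev_nat {_ _ _ _ _} _.
Arguments coev_nat {_ _ _ _ _} _.
Arguments pentagon {_ _ _ _ _ _} _ _ _ _.
Arguments triangle {_ _ _ _} _ _.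
Arguments ev_coev {_ _ _} _.
Arguments F2_id {_ _ _} _ {_ _} _.
Arguments F2_vcomp {_ _ _} _ {_ _ _ _ _} _ _.
Arguments phc_nat {_ _ _} _ {_ _ _ _ _ _ _} _ _.
Arguments phi_nat {_ _ _} _ {_ _ _ _} _.
Arguments coh_ass {_ _ _} _ {_ _ _ _} _ _ _.
Arguments coh_run {_ _ _} _ {_ _} _.
Arguments coh_lun {_ _ _} _ {_ _} _.
Arguments coh_ev {_ _ _} _ {_ _} _.
Arguments coh_coev {_ _ _} _ {_ _} _.
Lemma hcomp_vl (B : Bigroupoid) A A' A'' (g g' g'' : @C1 B A' A'') (f : C1 A A')
  (x : C2 g' g'') (y : C2 g g') :
  hcomp (vcomp x y) (id2 f) = vcomp (hcomp x (id2 f)) (hcomp y (id2 f)).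
Proof. rewrite <- hcomp_vcomp, vid_l. reflexivity. Qed.
Lemma hcomp_vr (B : Bigroupoid) A A' A'' (g : @C1 B A' A'') (f f' f'' : C1 A A')
  (x : C2 f' f'') (y : C2 f f') :
  hcomp (id2 g) (vcomp x y) = vcomp (hcomp (id2 g) x) (hcomp (id2 g) y).
Proof. rewrite <- hcomp_vcomp, vid_l. reflexivity. Qed.
Section Comp.
Variables (B C D : Bigroupoid) (G : Morph C D) (F : Morph B C).
Lemma mcomp_laws : IsMorph (mcomp_data G F).
Proof.
  pose proof (mlaws G) as HG; pose proof (mlaws F) as HF.
  split; simpl; intros.
  - rewrite (F2_id HF), (F2_id HG); reflexivity.
  - rewrite (F2_vcomp HF), (F2_vcomp HG); reflexivity.
  - repeat rewrite <- vassoc.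
    rewrite (phc_nat HG). rewrite vassoc, <- (F2_vcomp HG), (phc_nat HF), (F2_vcomp HG), <- vassoc. reflexivity.
  - repeat rewrite <- vassoc.
    rewrite (phi_nat HG). rewrite vassoc, <- (F2_vcomp HG), (phi_nat HF), (F2_vcomp HG), <- vassoc. reflexivity.
  - rewrite hcomp_vl, hcomp_vr. repeat rewrite <- vassoc.
    rewrite <- (F2_id HG (F1 F f)).
    rewrite (vassoc (phc G _ _) (hcomp (F2 G _) (F2 G _))).
    rewrite (phc_nat HG).
    repeat rewrite <- vassoc.
    rewrite (vassoc (F2 G (phc F _ _))), <- (F2_vcomp HG), (vassoc (F2 G (F2 F _))), <- (F2_vcomp HG).
    rewrite (coh_ass HF), !(F2_vcomp HG), (F2_id HG). repeat rewrite <- vassoc.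
    rewrite (coh_ass HG).
    rewrite (vassoc (F2 G (hcomp _ _))), <- (phc_nat HG), (F2_id HG), <- vassoc. reflexivity.
  - rewrite hcomp_vr. repeat rewrite <- vassoc.
    rewrite <- (F2_id HG (F1 F f)).
    rewrite (vassoc (phc G _ _)), (phc_nat HG).
    repeat rewrite <- vassoc.
    rewrite (vassoc (F2 G (phc F _ _))), <- (F2_vcomp HG), (vassoc (F2 G (F2 F _))), <- (F2_vcomp HG).
    rewrite (coh_run HF), (F2_id HG). apply (coh_run HG).
  - rewrite hcomp_vl. repeat rewrite <- vassoc.
    rewrite <- (F2_id HG (F1 F f)).
    rewrite (vassoc (phc G _ _)), (phc_nat HG).
    repeat rewrite <- vassoc.
    rewrite (vassoc (F2 G (phc F _ _))), <- (F2_vcomp HG), (vassoc (F2 G (F2 F _))), <- (F2_vcomp HG).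
    rewrite (coh_lun HF), (F2_id HG). apply (coh_lun HG).
  - rewrite hcomp_vl. repeat rewrite <- vassoc.
    rewrite <- (F2_id HG (F1 F f)).
    rewrite (vassoc (phc G _ _)), (phc_nat HG).
    repeat rewrite <- vassoc.
    rewrite (vassoc (F2 G (phc F _ _))), <- (F2_vcomp HG), (vassoc (F2 G (F2 F _))), <- (F2_vcomp HG).
    rewrite (coh_ev HF), (F2_vcomp HG). rewrite <- vassoc, (F2_id HG), (coh_ev HG).
    reflexivity.
  - rewrite hcomp_vr. repeat rewrite <- vassoc.
    rewrite (vassoc (F2 G (F2 F _))), <- (F2_vcomp HG), (coh_coev HF), !(F2_vcomp HG).
    repeat rewrite <- vassoc. rewrite (coh_coev HG).
    rewrite (vassoc (F2 G (hcomp _ _))), <- (phc_nat HG), (F2_id HG). repeat rewrite <- vassoc. reflexivity.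
Qed.
End Comp.
Arguments mcomp_laws {B C D} G F.

Definition mcomp {B C D : Bigroupoid} (G : Morph C D) (F : Morph B C) : Morph B D :=
  mkMorph (mcomp_data G F) (mcomp_laws G F).

Section Prod.
Variables B B' : Bigroupoid.

Definition pC0 : Type := (C0 B * C0 B')%type.
Definition pC1 (X Y : pC0) : Type := (C1 (fst X) (fst Y) * C1 (snd X) (snd Y))%type.
Definition pC2 {X Y : pC0} (u v : pC1 X Y) : Type :=
  (C2 (fst u) (fst v) * C2 (snd u) (snd v))%type.
Definition pvcomp {X Y} {f g h : pC1 X Y} (b : pC2 g h) (a : pC2 f g) : pC2 f h :=
  (vcomp (fst b) (fst a), vcomp (snd b) (snd a)).
Definition pid2 {X Y} (f : pC1 X Y) : pC2 f f := (id2 (fst f), id2 (snd f)).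
Definition pvinv {X Y} {f g : pC1 X Y} (a : pC2 f g) : pC2 g f :=
  (vinv (fst a), vinv (snd a)).
Definition pcomp1 {X Y Z} (g : pC1 Y Z) (f : pC1 X Y) : pC1 X Z :=
  (comp1 (fst g) (fst f), comp1 (snd g) (snd f)).
Definition phcomp {X Y Z} {g g' : pC1 Y Z} {f f' : pC1 X Y} (b : pC2 g g') (a : pC2 f f')
  : pC2 (pcomp1 g f) (pcomp1 g' f') :=
  (hcomp (fst b) (fst a), hcomp (snd b) (snd a)).
Definition punit1 (X : pC0) : pC1 X X := (unit1 (fst X), unit1 (snd X)).
Definition pinv1 {X Y} (f : pC1 X Y) : pC1 Y X := (inv1 (fst f), inv1 (snd f)).
Definition pinv2 {X Y} {f g : pC1 X Y} (a : pC2 f g) : pC2 (pinv1 f) (pinv1 g) :=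
  (inv2 (fst a), inv2 (snd a)).
Definition pass {X Y Z W} (h : pC1 Z W) (g : pC1 Y Z) (f : pC1 X Y)
  : pC2 (pcomp1 (pcomp1 h g) f) (pcomp1 h (pcomp1 g f)) :=
  (ass (fst h) (fst g) (fst f), ass (snd h) (snd g) (snd f)).
Definition plun {X Y} (f : pC1 X Y) : pC2 (pcomp1 (punit1 Y) f) f :=
  (lun (fst f), lun (snd f)).
Definition prun {X Y} (f : pC1 X Y) : pC2 (pcomp1 f (punit1 X)) f :=
  (run (fst f), run (snd f)).
Definition pev {X Y} (f : pC1 X Y) : pC2 (pcomp1 (pinv1 f) f) (punit1 X) :=
  (ev (fst f), ev (snd f)).
Definition pcoev {X Y} (f : pC1 X Y) : pC2 (punit1 Y) (pcomp1 f (pinv1 f)) :=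
  (coev (fst f), coev (snd f)).

Ltac prod_solve :=
  intros;
  unfold pC0, pC1, pC2, pvcomp, pid2, pvinv, pcomp1, phcomp, punit1, pinv1, pinv2,
    pass, plun, prun, pev, pcoev in *;
  repeat match goal with x : prod _ _ |- _ => destruct x end;
  simpl in *; f_equal;
  first [ apply vassoc | apply vid_l | apply vid_r | apply vinv_l | apply vinv_r
        | apply hcomp_id | apply hcomp_vcomp | apply inv2_id | apply inv2_vcomp
        | apply ass_nat | apply lun_nat | apply run_nat | apply ev_nat
        | apply coev_nat | apply pentagon | apply triangle | apply ev_coev ].

Lemma p_vassoc X Y (f g h k : pC1 X Y) (c : pC2 h k) (b : pC2 g h) (a : pC2 f g) :
  pvcomp c (pvcomp b a) = pvcomp (pvcomp c b) a.
Proof. prod_solve. Qed.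
Lemma p_vid_l X Y (f g : pC1 X Y) (a : pC2 f g) : pvcomp (pid2 g) a = a.
Proof. prod_solve. Qed.
Lemma p_vid_r X Y (f g : pC1 X Y) (a : pC2 f g) : pvcomp a (pid2 f) = a.
Proof. prod_solve. Qed.
Lemma p_vinv_l X Y (f g : pC1 X Y) (a : pC2 f g) : pvcomp (pvinv a) a = pid2 f.
Proof. prod_solve. Qed.
Lemma p_vinv_r X Y (f g : pC1 X Y) (a : pC2 f g) : pvcomp a (pvinv a) = pid2 g.
Proof. prod_solve. Qed.
Lemma p_hcomp_id X Y Z (g : pC1 Y Z) (f : pC1 X Y) :
  phcomp (pid2 g) (pid2 f) = pid2 (pcomp1 g f).
Proof. prod_solve. Qed.
Lemma p_hcomp_vcomp X Y Z (g g' g'' : pC1 Y Z) (f f' f'' : pC1 X Y)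
  (b' : pC2 g' g'') (b : pC2 g g') (a' : pC2 f' f'') (a : pC2 f f') :
  phcomp (pvcomp b' b) (pvcomp a' a) = pvcomp (phcomp b' a') (phcomp b a).
Proof. prod_solve. Qed.
Lemma p_inv2_id X Y (f : pC1 X Y) : pinv2 (pid2 f) = pid2 (pinv1 f).
Proof. prod_solve. Qed.
Lemma p_inv2_vcomp X Y (f g h : pC1 X Y) (b : pC2 g h) (a : pC2 f g) :
  pinv2 (pvcomp b a) = pvcomp (pinv2 b) (pinv2 a).
Proof. prod_solve. Qed.
Lemma p_ass_nat X Y Z W (h h' : pC1 Z W) (g g' : pC1 Y Z) (f f' : pC1 X Y)
  (c : pC2 h h') (b : pC2 g g') (a : pC2 f f') :
  pvcomp (pass h' g' f') (phcomp (phcomp c b) a)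
  = pvcomp (phcomp c (phcomp b a)) (pass h g f).
Proof. prod_solve. Qed.
Lemma p_lun_nat X Y (f f' : pC1 X Y) (a : pC2 f f') :
  pvcomp (plun f') (phcomp (pid2 (punit1 Y)) a) = pvcomp a (plun f).
Proof. prod_solve. Qed.
Lemma p_run_nat X Y (f f' : pC1 X Y) (a : pC2 f f') :
  pvcomp (prun f') (phcomp a (pid2 (punit1 X))) = pvcomp a (prun f).
Proof. prod_solve. Qed.
Lemma p_ev_nat X Y (f f' : pC1 X Y) (a : pC2 f f') :
  pvcomp (pev f') (phcomp (pinv2 a) a) = pev f.
Proof. prod_solve. Qed.
Lemma p_coev_nat X Y (f f' : pC1 X Y) (a : pC2 f f') :
  pcoev f' = pvcomp (phcomp a (pinv2 a)) (pcoev f).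
Proof. prod_solve. Qed.
Lemma p_pentagon X Y Z W V (k : pC1 W V) (h : pC1 Z W) (g : pC1 Y Z) (f : pC1 X Y) :
  pvcomp (pass k h (pcomp1 g f)) (pass (pcomp1 k h) g f)
  = pvcomp (phcomp (pid2 k) (pass h g f))
      (pvcomp (pass k (pcomp1 h g) f) (phcomp (pass k h g) (pid2 f))).
Proof. prod_solve. Qed.
Lemma p_triangle X Y Z (g : pC1 Y Z) (f : pC1 X Y) :
  pvcomp (phcomp (pid2 g) (plun f)) (pass g (punit1 Y) f) = phcomp (prun g) (pid2 f).
Proof. prod_solve. Qed.
Lemma p_ev_coev X Y (f : pC1 X Y) :
  pvcomp (prun f) (pvcomp (phcomp (pid2 f) (pev f))
    (pvcomp (pass f (pinv1 f) f) (phcomp (pcoev f) (pid2 f)))) = plun f.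
Proof. prod_solve. Qed.

Definition ProdBG : Bigroupoid :=
  {| C0 := pC0; C1 := pC1; C2 := @pC2; vcomp := @pvcomp; id2 := @pid2;
     vinv := @pvinv; vassoc := p_vassoc; vid_l := p_vid_l; vid_r := p_vid_r;
     vinv_l := p_vinv_l; vinv_r := p_vinv_r; comp1 := @pcomp1; hcomp := @phcomp;
     hcomp_id := p_hcomp_id; hcomp_vcomp := p_hcomp_vcomp; unit1 := punit1;
     inv1 := @pinv1; inv2 := @pinv2; inv2_id := p_inv2_id;
     inv2_vcomp := p_inv2_vcomp; ass := @pass; ass_nat := p_ass_nat;
     lun := @plun; lun_nat := p_lun_nat; run := @prun; run_nat := p_run_nat;
     ev := @pev; ev_nat := p_ev_nat; coev := @pcoev; coev_nat := p_coev_nat;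
     pentagon := p_pentagon; triangle := p_triangle; ev_coev := p_ev_coev |}.
End Prod.
Definition diag_data (B : Bigroupoid) : MorphData B (ProdBG B B) :=
  @mkMorphData B (ProdBG B B) (fun A => (A, A))
    (fun A A' f => (f, f))
    (fun A A' f g a => (a, a))
    (fun A A' A'' g f => (id2 (comp1 g f), id2 (comp1 g f)))
    (fun A => (id2 (unit1 A), id2 (unit1 A)))
    (fun A A' f => (id2 (inv1 f), id2 (inv1 f))).

Lemma diag_laws (B : Bigroupoid) : IsMorph (diag_data B).
Proof.
  split; intros; cbn; unfold pvcomp, phcomp, pid2, pinv2, pass, prun, plun, pev, pcoev; cbn; f_equal;
  repeat first [ rewrite hcomp_id | rewrite inv2_id | rewrite vid_l | rewrite vid_r ];
  first [ reflexivity | apply ass_nat | apply hcomp_id | apply triangle ].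
Qed.

Definition diag (B : Bigroupoid) : Morph B (ProdBG B B) :=
  mkMorph (diag_data B) (diag_laws B).

(* The equalities "F A = X, F a = b" (resp. "F a = b, F alpha = beta") are
   stated as equalities of dependent pairs. *)
Definition fibration {B C : Bigroupoid} (F : MorphData B C) : Prop :=
  (forall (A' : C0 B) (X : C0 C) (b : C1 X (F0 F A')),
     exists (A : C0 B) (a : C1 A A'),
       existT (fun Y => C1 Y (F0 F A')) (F0 F A) (F1 F a)
       = existT (fun Y => C1 Y (F0 F A')) X b)
  /\
  (forall (A A' : C0 B) (a' : C1 A A') (b : C1 (F0 F A) (F0 F A'))
          (beta : C2 b (F1 F a')),
     exists (a : C1 A A') (alpha : C2 a a'),
       existT (fun y => C2 y (F1 F a')) (F1 F a) (F2 F alpha)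
       = existT (fun y => C2 y (F1 F a')) b beta).

(* F_{A,A'} : B(A,A') -> C(FA,FA') is an equivalence of categories:
   there is a functor G back and natural isomorphisms GF ~ 1 and FG ~ 1
   (in a groupoid every natural transformation is a natural isomorphism). *)
Definition hom_equivalence {B C : Bigroupoid} (F : MorphData B C) (A A' : C0 B) : Prop :=
  exists (G1 : C1 (F0 F A) (F0 F A') -> C1 A A')
         (G2 : forall x y : C1 (F0 F A) (F0 F A'), C2 x y -> C2 (G1 x) (G1 y)),
    (forall x, G2 x x (id2 x) = id2 (G1 x))
    /\ (forall x y z (b : C2 y z) (a : C2 x y),
          G2 x z (vcomp b a) = vcomp (G2 y z b) (G2 x y a))
    /\ (exists eta : forall a : C1 A A', C2 (G1 (F1 F a)) a,
          forall (a a' : C1 A A') (al : C2 a a'),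
            vcomp (eta a') (G2 _ _ (F2 F al)) = vcomp al (eta a))
    /\ (exists eps : forall x : C1 (F0 F A) (F0 F A'), C2 (F1 F (G1 x)) x,
          forall x x' (be : C2 x x'),
            vcomp (eps x') (F2 F (G2 x x' be)) = vcomp be (eps x)).

Definition weak_equivalence {B C : Bigroupoid} (F : MorphData B C) : Prop :=
  (forall X : C0 C, exists A' : C0 B, inhabited (C1 X (F0 F A')))
  /\ (forall A A' : C0 B, hom_equivalence F A A').

(* The path object has as 0-cells the 1-cells e : A2 -> A1 of B, as 1-cells from e to e'
   the squares f1 * e => e' * f2 (composed by pasting), and as 2-cells the pairs (a1, a2)
   of 2-cells between the sides that fit into a commuting cylinder.  In a bigroupoid
   whiskering by a 1-cell is an equivalence of hom-groupoids, so a2 is determined by a1;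
   hence the structure of the path object is inherited from B, and the endpoint morphism
   sends a 2-cell a1 to (a1, transport of a1).
   R sends A to the identity path 1_A and f to the square f * 1 => 1 * f; its hom functors
   are equivalences with quasi-inverse taking the first side, and every path e : A2 -> A1 receives
   the square (1, e) from 1_{A1}, so R is a weak equivalence.  The endpoint morphism is a
   fibration: (b1, b2) into the ends of e lifts to a square from b1^* * (e * b2) to e, and
   (beta1, beta2) lifts to the conjugate of a square by beta1 and beta2. *)

From Stdlib Require Import FunctionalExtensionality ProofIrrelevance.

Local Notation "b ∘ a" := (vcomp b a) (at level 40, left associativity).
Local Notation "b ⋆ a" := (hcomp b a) (at level 35).

Ltac vassoc_right := repeat rewrite <- vassoc.

#[local] Arguments hcomp_vl {B A A' A'' g g' g''} f x y.
#[local] Arguments hcomp_vr {B A A' A''} g {f f' f''} x y.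

Section Calculus.
Context {B : Bigroupoid}.

Lemma vinv_id2 {A A'} (f : @C1 B A A') : vinv (id2 f) = id2 f.
Proof. rewrite <- (vid_l (vinv (id2 f))). apply vinv_r. Qed.

Lemma vcancel_r {A A'} {f g h : @C1 B A A'} (x y : C2 g h) (a : C2 f g) :
  x ∘ a = y ∘ a -> x = y.
Proof. intro H. rewrite <- (vid_r x), <- (vid_r y), <- (vinv_r a), !vassoc, H. reflexivity. Qed.

Lemma vcancel_l {A A'} {f g h : @C1 B A A'} (x y : C2 f g) (a : C2 g h) :
  a ∘ x = a ∘ y -> x = y.
Proof. intro H. rewrite <- (vid_l x), <- (vid_l y), <- (vinv_l a), <- !vassoc, H. reflexivity. Qed.

Lemma vinv_unique {A A'} {f g : @C1 B A A'} (a : C2 f g) (b : C2 g f) :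
  b ∘ a = id2 f -> b = vinv a.
Proof. intro H. apply (vcancel_r _ _ a). rewrite H, vinv_l. reflexivity. Qed.

Lemma vinv_vcomp {A A'} {f g h : @C1 B A A'} (b : C2 g h) (a : C2 f g) :
  vinv (b ∘ a) = vinv a ∘ vinv b.
Proof.
  symmetry; apply vinv_unique.
  rewrite <- vassoc, (vassoc (vinv b)), vinv_l, vid_l, vinv_l. reflexivity.
Qed.

Lemma vinv_naturality {A A'} {f g h k : @C1 B A A'}
  (y : C2 g h) (a : C2 f g) (b : C2 k h) (x : C2 f k) :
  y ∘ a = b ∘ x -> vinv y ∘ b = a ∘ vinv x.
Proof.
  intro H. rewrite <- (vid_r (vinv y ∘ b)), <- (vinv_r x), vassoc, <- (vassoc (vinv y)), <- H,
    (vassoc (vinv y)), (vinv_l y), vid_l. reflexivity.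
Qed.

Lemma hcomp_vinv {A A' A''} {g g' : @C1 B A' A''} {f f' : C1 A A'} (b : C2 g g') (a : C2 f f') :
  vinv b ⋆ vinv a = vinv (b ⋆ a).
Proof. apply vinv_unique. rewrite <- hcomp_vcomp, !vinv_l. apply hcomp_id. Qed.

Lemma vinv_whisker_r {A A' A''} {g g' : @C1 B A' A''} (f : C1 A A') (b : C2 g g') :
  vinv (b ⋆ id2 f) = vinv b ⋆ id2 f.
Proof. rewrite <- hcomp_vinv, vinv_id2. reflexivity. Qed.

Lemma vinv_whisker_l {A A' A''} (g : @C1 B A' A'') {f f' : C1 A A'} (a : C2 f f') :
  vinv (id2 g ⋆ a) = id2 g ⋆ vinv a.
Proof. rewrite <- hcomp_vinv, vinv_id2. reflexivity. Qed.

Lemma hcomp_vcomp_l {A A' A''} {g g' g'' : @C1 B A' A''} {f f' : C1 A A'}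
  (t : C2 g' g'') (s : C2 g g') (u : C2 f f') : (t ∘ s) ⋆ u = (t ⋆ u) ∘ (s ⋆ id2 f).
Proof. rewrite <- hcomp_vcomp, vid_r. reflexivity. Qed.

Lemma hcomp_vcomp_r {A A' A''} {g g' : @C1 B A' A''} {f f' f'' : C1 A A'}
  (u : C2 g g') (t : C2 f' f'') (s : C2 f f') : u ⋆ (t ∘ s) = (u ⋆ t) ∘ (id2 g ⋆ s).
Proof. rewrite <- hcomp_vcomp, vid_r. reflexivity. Qed.

Lemma whisker_r_hcomp {A A' A''} {g g' g'' : @C1 B A' A''} {f f' : C1 A A'}
  (s : C2 g' g'') (u : C2 g g') (v : C2 f f') : (s ⋆ id2 f') ∘ (u ⋆ v) = (s ∘ u) ⋆ v.
Proof. rewrite <- hcomp_vcomp, vid_l. reflexivity. Qed.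

Lemma whisker_l_hcomp {A A' A''} {g g' : @C1 B A' A''} {f f' f'' : C1 A A'}
  (s : C2 f' f'') (u : C2 g g') (v : C2 f f') : (id2 g' ⋆ s) ∘ (u ⋆ v) = u ⋆ (s ∘ v).
Proof. rewrite <- hcomp_vcomp, vid_l. reflexivity. Qed.

Lemma whisker_interchange {A A' A''} {g g' : @C1 B A' A''} {f f' : C1 A A'}
  (b : C2 g g') (a : C2 f f') :
  (id2 g' ⋆ a) ∘ (b ⋆ id2 f) = (b ⋆ id2 f') ∘ (id2 g ⋆ a).
Proof. rewrite whisker_l_hcomp, whisker_r_hcomp, !vid_r. reflexivity. Qed.

Lemma vinv_ass_nat {A A' A'' A'''} {h h' : @C1 B A'' A'''} {g g' : C1 A' A''}
  {f f' : C1 A A'} (c : C2 h h') (b : C2 g g') (a : C2 f f') :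
  vinv (ass h' g' f') ∘ (c ⋆ (b ⋆ a)) = ((c ⋆ b) ⋆ a) ∘ vinv (ass h g f).
Proof. apply vinv_naturality, ass_nat. Qed.

Lemma hcomp_assoc {A A' A'' A'''} {h h' : @C1 B A'' A'''} {g g' : C1 A' A''}
  {f f' : C1 A A'} (c : C2 h h') (b : C2 g g') (a : C2 f f') :
  (c ⋆ b) ⋆ a = vinv (ass h' g' f') ∘ ((c ⋆ (b ⋆ a)) ∘ ass h g f).
Proof. rewrite <- ass_nat, vassoc, vinv_l, vid_l. reflexivity. Qed.

End Calculus.
Section Unwhisker.
Context {B : Bigroupoid}.

Definition expand_r {L M N} (x : @C1 B M N) (f : C1 L M) :
  C2 x (comp1 (comp1 x f) (inv1 f)) :=
  vinv (ass x f (inv1 f)) ∘ (id2 x ⋆ coev f) ∘ vinv (run x).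

Definition expand_l {L M N} (e : @C1 B M N) (x : C1 L M) :
  C2 x (comp1 (inv1 e) (comp1 e x)) :=
  ass (inv1 e) e x ∘ (vinv (ev e) ⋆ id2 x) ∘ vinv (lun x).

Definition unwhisker_r {L M N} (f : @C1 B L M) {x y : C1 M N}
  (z : C2 (comp1 x f) (comp1 y f)) : C2 x y :=
  vinv (expand_r y f) ∘ ((z ⋆ id2 (inv1 f)) ∘ expand_r x f).

Definition unwhisker_l {L M N} (e : @C1 B M N) {x y : C1 L M}
  (z : C2 (comp1 e x) (comp1 e y)) : C2 x y :=
  vinv (expand_l e y) ∘ ((id2 (inv1 e) ⋆ z) ∘ expand_l e x).

Lemma expand_r_nat {L M N} (f : @C1 B L M) {x y : C1 M N} (a : C2 x y) :
  expand_r y f ∘ a = ((a ⋆ id2 f) ⋆ id2 (inv1 f)) ∘ expand_r x f.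
Proof.
  unfold expand_r. vassoc_right.
  rewrite (vinv_naturality _ _ _ _ (run_nat a)).
  rewrite (vassoc (id2 y ⋆ coev f)), whisker_interchange. vassoc_right.
  rewrite <- (hcomp_id f (inv1 f)), (vassoc (vinv _)), vinv_ass_nat. vassoc_right.
  reflexivity.
Qed.

Lemma expand_l_nat {L M N} (e : @C1 B M N) {x y : C1 L M} (a : C2 x y) :
  expand_l e y ∘ a = (id2 (inv1 e) ⋆ (id2 e ⋆ a)) ∘ expand_l e x.
Proof.
  unfold expand_l. vassoc_right.
  rewrite (vinv_naturality _ _ _ _ (lun_nat a)).
  rewrite (vassoc (vinv (ev e) ⋆ id2 y)), <- whisker_interchange. vassoc_right.
  rewrite <- (hcomp_id (inv1 e) e), (vassoc (ass _ _ _)), ass_nat. vassoc_right.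
  reflexivity.
Qed.

Lemma unwhisker_r_whisker {L M N} (f : @C1 B L M) {x y : C1 M N} (a : C2 x y) :
  unwhisker_r f (a ⋆ id2 f) = a.
Proof. unfold unwhisker_r. rewrite <- expand_r_nat, vassoc, vinv_l, vid_l. reflexivity. Qed.

Lemma unwhisker_l_whisker {L M N} (e : @C1 B M N) {x y : C1 L M} (a : C2 x y) :
  unwhisker_l e (id2 e ⋆ a) = a.
Proof. unfold unwhisker_l. rewrite <- expand_l_nat, vassoc, vinv_l, vid_l. reflexivity. Qed.

Lemma whisker_r_inj {L M N} (f : @C1 B L M) {x y : C1 M N} (a b : C2 x y) :
  a ⋆ id2 f = b ⋆ id2 f -> a = b.
Proof.
  intro H. rewrite <- (unwhisker_r_whisker f a), <- (unwhisker_r_whisker f b), H. reflexivity.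
Qed.

Lemma whisker_l_inj {L M N} (e : @C1 B M N) {x y : C1 L M} (a b : C2 x y) :
  id2 e ⋆ a = id2 e ⋆ b -> a = b.
Proof.
  intro H. rewrite <- (unwhisker_l_whisker e a), <- (unwhisker_l_whisker e b), H. reflexivity.
Qed.

Lemma whisker_unwhisker_r {L M N} (f : @C1 B L M) {x y : C1 M N}
  (z : C2 (comp1 x f) (comp1 y f)) : unwhisker_r f z ⋆ id2 f = z.
Proof.
  apply (whisker_r_inj (inv1 f)), (vcancel_r _ _ (expand_r x f)), (vcancel_l _ _ (vinv (expand_r y f))).
  rewrite <- expand_r_nat, vassoc, vinv_l, vid_l. reflexivity.
Qed.

Lemma whisker_unwhisker_l {L M N} (e : @C1 B M N) {x y : C1 L M}
  (z : C2 (comp1 e x) (comp1 e y)) : id2 e ⋆ unwhisker_l e z = z.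
Proof.
  apply (whisker_l_inj (inv1 e)), (vcancel_r _ _ (expand_l e x)), (vcancel_l _ _ (vinv (expand_l e y))).
  rewrite <- expand_l_nat, vassoc, vinv_l, vid_l. reflexivity.
Qed.

End Unwhisker.
Section Kelly.
Context {B : Bigroupoid}.

Lemma lun_comp1 {A A' A''} (g : @C1 B A' A'') (f : C1 A A') :
  lun (comp1 g f) ∘ ass (unit1 A'') g f = lun g ⋆ id2 f.
Proof.
  apply (whisker_l_inj (unit1 A'')).
  apply (vcancel_r _ _ (ass (unit1 A'') (comp1 (unit1 A'') g) f ∘ (ass (unit1 _) (unit1 _) g ⋆ id2 f))).
  rewrite hcomp_vr.
  transitivity ((id2 _ ⋆ lun (comp1 g f))
    ∘ (ass (unit1 _) (unit1 _) (comp1 g f) ∘ ass (comp1 (unit1 _) (unit1 _)) g f)).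
  { rewrite pentagon. vassoc_right. reflexivity. }
  rewrite vassoc, triangle, <- hcomp_id, <- ass_nat, <- triangle, (hcomp_vl f).
  rewrite (vassoc (ass _ _ _)), ass_nat. vassoc_right. reflexivity.
Qed.

Lemma run_comp1 {A A' A''} (g : @C1 B A' A'') (f : C1 A A') :
  run (comp1 g f) = (id2 g ⋆ run f) ∘ ass g f (unit1 A).
Proof.
  apply (whisker_r_inj (unit1 A)), (vcancel_l _ _ (ass g f (unit1 A))).
  rewrite <- (triangle (comp1 g f) (unit1 A)), (hcomp_vl (unit1 A)).
  rewrite vassoc, <- (hcomp_id g f), ass_nat. vassoc_right. rewrite pentagon. vassoc_right.
  rewrite (vassoc (id2 g ⋆ (id2 f ⋆ lun (unit1 A)))), <- hcomp_vr, triangle.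
  rewrite vassoc, <- ass_nat. vassoc_right. reflexivity.
Qed.

Lemma lun_unit1 (A : C0 B) : lun (unit1 A) = run (unit1 A).
Proof.
  assert (E : id2 (unit1 A) ⋆ lun (unit1 A) = lun (comp1 (unit1 A) (unit1 A))).
  { apply (vcancel_l _ _ (lun (unit1 A))). apply lun_nat. }
  apply (whisker_r_inj (unit1 A)). rewrite <- lun_comp1, <- triangle, E. reflexivity.
Qed.

End Kelly.
Section Pasting.
Context {B : Bigroupoid}.

Lemma pentagon_vinv {A A' A'' A''' A''''} (k : @C1 B A''' A'''') (h : C1 A'' A''')
  (g : C1 A' A'') (f : C1 A A') :
  vinv (ass (comp1 k h) g f) ∘ vinv (ass k h (comp1 g f))
  = (vinv (ass k h g) ⋆ id2 f) ∘ (vinv (ass k (comp1 h g) f) ∘ (id2 k ⋆ vinv (ass h g f))).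
Proof.
  rewrite <- vinv_vcomp, pentagon, !vinv_vcomp, vinv_whisker_r, vinv_whisker_l.
  vassoc_right. reflexivity.
Qed.

Lemma pentagon_tail {A A' A'' A''' A''''} (k : @C1 B A''' A'''') (h : C1 A'' A''')
  (g : C1 A' A'') (f : C1 A A') {x : C1 A A''''} (r : C2 x _) :
  (id2 k ⋆ ass h g f) ∘ (ass k (comp1 h g) f ∘ ((ass k h g ⋆ id2 f)
    ∘ (vinv (ass (comp1 k h) g f) ∘ r)))
  = ass k h (comp1 g f) ∘ r.
Proof.
  transitivity (((id2 k ⋆ ass h g f) ∘ (ass k (comp1 h g) f ∘ (ass k h g ⋆ id2 f)))
    ∘ (vinv (ass (comp1 k h) g f) ∘ r)).
  { vassoc_right. reflexivity. }
  rewrite <- pentagon. vassoc_right.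
  rewrite (vassoc (ass (comp1 k h) g f)), vinv_r, vid_l. reflexivity.
Qed.

Lemma pentagon_tail_vinv {A A' A'' A''' A''''} (k : @C1 B A''' A'''') (h : C1 A'' A''')
  (g : C1 A' A'') (f : C1 A A') {x : C1 A _} (r : C2 x _) :
  ass (comp1 k h) g f ∘ ((vinv (ass k h g) ⋆ id2 f) ∘ (vinv (ass k (comp1 h g) f) ∘ r))
  = vinv (ass k h (comp1 g f)) ∘ ((id2 k ⋆ ass h g f) ∘ r).
Proof.
  apply (vcancel_l _ _ (ass k h (comp1 g f))).
  rewrite !vassoc, pentagon, (vinv_r (ass k h (comp1 g f))), vid_l. vassoc_right.
  rewrite (vassoc (ass k h g ⋆ id2 f)), <- hcomp_vl, vinv_r, hcomp_id, vid_l.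
  rewrite (vassoc (ass k (comp1 h g) f)), vinv_r, vid_l. reflexivity.
Qed.

Lemma whisker_r_vinv_cancel {A A' A''} {g g' : @C1 B A' A''} (f : C1 A A') (u : C2 g g')
  {x : C1 A _} (r : C2 x _) :
  (u ⋆ id2 f) ∘ ((vinv u ⋆ id2 f) ∘ r) = r.
Proof. rewrite vassoc, <- hcomp_vl, vinv_r, hcomp_id, vid_l. reflexivity. Qed.

Section Squares.
Context {x1 x2 y1 y2 z1 z2 : C0 B} {a : C1 x2 x1} {b : C1 y2 y1} {c : C1 z2 z1}.

Definition paste {g1 : C1 y1 z1} {g2 : C1 y2 z2} {f1 : C1 x1 y1} {f2 : C1 x2 y2}
  (t : C2 (comp1 g1 b) (comp1 c g2)) (s : C2 (comp1 f1 a) (comp1 b f2)) :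
  C2 (comp1 (comp1 g1 f1) a) (comp1 c (comp1 g2 f2)) :=
  ass c g2 f2 ∘ ((t ⋆ id2 f2) ∘ (vinv (ass g1 b f2) ∘ ((id2 g1 ⋆ s) ∘ ass g1 f1 a))).

Lemma paste_nat {g1 g1' : C1 y1 z1} {g2 g2' : C1 y2 z2} {f1 f1' : C1 x1 y1} {f2 f2' : C1 x2 y2}
  (t : C2 (comp1 g1 b) (comp1 c g2)) (s : C2 (comp1 f1 a) (comp1 b f2))
  (t' : C2 (comp1 g1' b) (comp1 c g2')) (s' : C2 (comp1 f1' a) (comp1 b f2'))
  (a1 : C2 f1 f1') (a2 : C2 f2 f2') (b1 : C2 g1 g1') (b2 : C2 g2 g2') :
  s' ∘ (a1 ⋆ id2 a) = (id2 b ⋆ a2) ∘ s ->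
  t' ∘ (b1 ⋆ id2 b) = (id2 c ⋆ b2) ∘ t ->
  paste t' s' ∘ ((b1 ⋆ a1) ⋆ id2 a) = (id2 c ⋆ (b2 ⋆ a2)) ∘ paste t s.
Proof.
  intros Hs Ht. unfold paste. vassoc_right.
  rewrite ass_nat, (vassoc (id2 g1' ⋆ s')), whisker_l_hcomp, Hs, hcomp_vcomp_r. vassoc_right.
  rewrite (vassoc (vinv (ass g1' b f2'))), vinv_ass_nat. vassoc_right.
  rewrite (vassoc (t' ⋆ id2 f2')), whisker_r_hcomp, Ht, hcomp_vcomp_l. vassoc_right.
  rewrite (vassoc (ass c g2' f2')), ass_nat. vassoc_right. reflexivity.
Qed.

Lemma paste_inj_l {g1 : C1 y1 z1} {g2 : C1 y2 z2} {f1 : C1 x1 y1} {f2 : C1 x2 y2}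
  (t t' : C2 (comp1 g1 b) (comp1 c g2)) (s : C2 (comp1 f1 a) (comp1 b f2)) :
  paste t s = paste t' s -> t = t'.
Proof.
  unfold paste. intro H. apply vcancel_l, vcancel_r, whisker_r_inj in H. exact H.
Qed.

End Squares.

Lemma paste_ass {x1 x2 y1 y2 z1 z2 w1 w2 : C0 B}
  {a : C1 x2 x1} {b : C1 y2 y1} {c : C1 z2 z1} {d : C1 w2 w1}
  {h1 : C1 z1 w1} {h2 : C1 z2 w2} {g1 : C1 y1 z1} {g2 : C1 y2 z2} {f1 : C1 x1 y1} {f2 : C1 x2 y2}
  (r : C2 (comp1 h1 c) (comp1 d h2)) (t : C2 (comp1 g1 b) (comp1 c g2))
  (s : C2 (comp1 f1 a) (comp1 b f2)) :
  paste r (paste t s) ∘ (ass h1 g1 f1 ⋆ id2 a) = (id2 d ⋆ ass h2 g2 f2) ∘ paste (paste r t) s.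
Proof.
  unfold paste. rewrite !hcomp_vr, !(hcomp_vl f2). vassoc_right.
  rewrite <- (hcomp_id h1 g1), (hcomp_assoc (id2 h1) (id2 g1) s). vassoc_right.
  rewrite pentagon, (vassoc (vinv (ass (comp1 h1 g1) b f2))), pentagon_vinv. vassoc_right.
  rewrite whisker_r_vinv_cancel, (vassoc ((id2 h1 ⋆ t) ⋆ id2 f2)), <- vinv_ass_nat. vassoc_right.
  rewrite (hcomp_assoc r (id2 g2) (id2 f2)), (hcomp_id g2 f2). vassoc_right.
  rewrite pentagon_tail, pentagon_tail_vinv. reflexivity.
Qed.

Definition id_square {x1 x2 : C0 B} (e : C1 x2 x1) : C2 (comp1 (unit1 x1) e) (comp1 e (unit1 x2)) :=
  vinv (run e) ∘ lun e.

Lemma paste_id_square_l {x1 x2 y1 y2 : C0 B} {a : C1 x2 x1} {b : C1 y2 y1}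
  {f1 : C1 x1 y1} {f2 : C1 x2 y2} (s : C2 (comp1 f1 a) (comp1 b f2)) :
  s ∘ (lun f1 ⋆ id2 a) = (id2 b ⋆ lun f2) ∘ paste (id_square b) s.
Proof.
  unfold paste, id_square. rewrite (vassoc (id2 b ⋆ lun f2)), triangle, (hcomp_vl f2). vassoc_right.
  rewrite (vassoc (run b ⋆ id2 f2)), <- (hcomp_vl f2), vinv_r, hcomp_id, vid_l.
  rewrite <- (lun_comp1 b f2). vassoc_right.
  rewrite (vassoc (ass (unit1 y1) b f2)), vinv_r, vid_l.
  rewrite (vassoc (lun (comp1 b f2))), lun_nat. vassoc_right. rewrite lun_comp1. reflexivity.
Qed.

Lemma paste_id_square_r {x1 x2 y1 y2 : C0 B} {a : C1 x2 x1} {b : C1 y2 y1}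
  {f1 : C1 x1 y1} {f2 : C1 x2 y2} (s : C2 (comp1 f1 a) (comp1 b f2)) :
  s ∘ (run f1 ⋆ id2 a) = (id2 b ⋆ run f2) ∘ paste s (id_square a).
Proof.
  unfold paste, id_square. rewrite (vassoc (id2 b ⋆ run f2)), <- run_comp1.
  rewrite (vassoc (run (comp1 b f2))), run_nat. vassoc_right.
  rewrite (run_comp1 f1 a). vassoc_right.
  rewrite (vassoc (ass f1 a (unit1 x2))), vinv_r, vid_l.
  rewrite (vassoc (id2 f1 ⋆ run a)), <- hcomp_vr, (vassoc (run a)), vinv_r, vid_l, triangle.
  reflexivity.
Qed.

End Pasting.
Section PathObject.
Context {B : Bigroupoid}.

Record Path0 := mkPath0 { pt1 : C0 B; pt2 : C0 B; path : C1 pt2 pt1 }.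

Record Square (X Y : Path0) := mkSquare {
  side1 : C1 (pt1 X) (pt1 Y);
  side2 : C1 (pt2 X) (pt2 Y);
  square_cell : C2 (comp1 side1 (path X)) (comp1 (path Y) side2) }.
#[global] Arguments mkSquare {X Y}.
#[global] Arguments side1 {X Y}.
#[global] Arguments side2 {X Y}.
#[global] Arguments square_cell {X Y}.

Definition compatible {X Y} (f g : Square X Y) (a1 : C2 (side1 f) (side1 g))
  (a2 : C2 (side2 f) (side2 g)) : Prop :=
  square_cell g ∘ (a1 ⋆ id2 (path X)) = (id2 (path Y) ⋆ a2) ∘ square_cell f.

Definition transport {X Y} (f g : Square X Y) (a1 : C2 (side1 f) (side1 g)) :
  C2 (side2 f) (side2 g) :=
  unwhisker_l (path Y) (square_cell g ∘ ((a1 ⋆ id2 (path X)) ∘ vinv (square_cell f))).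

Lemma transport_unique {X Y} (f g : Square X Y) a1 a2 :
  compatible f g a1 a2 -> transport f g a1 = a2.
Proof.
  unfold compatible, transport. intro H.
  rewrite vassoc, H, <- vassoc, vinv_r, vid_r. apply unwhisker_l_whisker.
Qed.

Lemma transport_compatible {X Y} (f g : Square X Y) a1 :
  compatible f g a1 (transport f g a1).
Proof.
  unfold compatible, transport. rewrite whisker_unwhisker_l. vassoc_right.
  rewrite vinv_l, vid_r. reflexivity.
Qed.

Lemma compatible_unique {X Y} (f g : Square X Y) a1 a2 a2' :
  compatible f g a1 a2 -> compatible f g a1 a2' -> a2 = a2'.
Proof.
  intros H H'. rewrite <- (transport_unique _ _ _ _ H), <- (transport_unique _ _ _ _ H').
  reflexivity.
Qed.

Lemma compatible_id {X Y} (f : Square X Y) : compatible f f (id2 (side1 f)) (id2 (side2 f)).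
Proof. unfold compatible. rewrite !hcomp_id, vid_l, vid_r. reflexivity. Qed.

Lemma compatible_vcomp {X Y} (f g h : Square X Y) a1 a2 b1 b2 :
  compatible f g a1 a2 -> compatible g h b1 b2 -> compatible f h (b1 ∘ a1) (b2 ∘ a2).
Proof.
  unfold compatible. intros Ha Hb.
  rewrite (hcomp_vl (path X)), vassoc, Hb, <- vassoc, Ha, hcomp_vr. vassoc_right. reflexivity.
Qed.

Definition square_comp {X Y Z} (g : Square Y Z) (f : Square X Y) : Square X Z :=
  mkSquare (comp1 (side1 g) (side1 f)) (comp1 (side2 g) (side2 f))
    (paste (square_cell g) (square_cell f)).

Definition square_unit (X : Path0) : Square X X :=
  mkSquare (unit1 (pt1 X)) (unit1 (pt2 X)) (id_square (path X)).

Definition ev_square {X Y} (f : Square X Y) :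
  C2 (comp1 (comp1 (inv1 (side1 f)) (side1 f)) (path X))
     (comp1 (path X) (comp1 (inv1 (side2 f)) (side2 f))) :=
  vinv (id2 (path X) ⋆ ev (side2 f)) ∘ (id_square (path X) ∘ (ev (side1 f) ⋆ id2 (path X))).

(* The inverse square is the unique one whose pasting with [f] is [ev_square f]; it exists
   because right whiskering by [side2 f] is surjective on 2-cells. *)
Definition inv_square_cell {X Y} (f : Square X Y) :
  C2 (comp1 (inv1 (side1 f)) (path Y)) (comp1 (path X) (inv1 (side2 f))) :=
  unwhisker_r (side2 f) (vinv (ass (path X) (inv1 (side2 f)) (side2 f))
    ∘ (ev_square f ∘ (vinv (ass (inv1 (side1 f)) (side1 f) (path X))
    ∘ (vinv (id2 (inv1 (side1 f)) ⋆ square_cell f) ∘ ass (inv1 (side1 f)) (path Y) (side2 f))))).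

Definition square_inv {X Y} (f : Square X Y) : Square Y X :=
  mkSquare (inv1 (side1 f)) (inv1 (side2 f)) (inv_square_cell f).

Lemma paste_inv_square {X Y} (f : Square X Y) :
  paste (inv_square_cell f) (square_cell f) = ev_square f.
Proof.
  unfold paste, inv_square_cell. rewrite whisker_unwhisker_r. vassoc_right.
  rewrite (vassoc (ass (path X) _ _)), vinv_r, vid_l.
  rewrite (vassoc (ass (inv1 (side1 f)) (path Y) _)), vinv_r, vid_l.
  rewrite (vassoc (vinv (id2 (inv1 (side1 f)) ⋆ square_cell f))), vinv_l, vid_l.
  rewrite vinv_l, vid_r. reflexivity.
Qed.

Lemma compatible_hcomp {X Y Z} (g g' : Square Y Z) (f f' : Square X Y) a1 a2 b1 b2 :
  compatible f f' a1 a2 -> compatible g g' b1 b2 ->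
  compatible (square_comp g f) (square_comp g' f') (b1 ⋆ a1) (b2 ⋆ a2).
Proof. apply paste_nat. Qed.

Lemma compatible_ass {X Y Z W} (h : Square Z W) (g : Square Y Z) (f : Square X Y) :
  compatible (square_comp (square_comp h g) f) (square_comp h (square_comp g f))
    (ass (side1 h) (side1 g) (side1 f)) (ass (side2 h) (side2 g) (side2 f)).
Proof. apply paste_ass. Qed.

Lemma compatible_lun {X Y} (f : Square X Y) :
  compatible (square_comp (square_unit Y) f) f (lun (side1 f)) (lun (side2 f)).
Proof. apply paste_id_square_l. Qed.

Lemma compatible_run {X Y} (f : Square X Y) :
  compatible (square_comp f (square_unit X)) f (run (side1 f)) (run (side2 f)).
Proof. apply paste_id_square_r. Qed.

Lemma compatible_ev {X Y} (f : Square X Y) :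
  compatible (square_comp (square_inv f) f) (square_unit X) (ev (side1 f)) (ev (side2 f)).
Proof.
  unfold compatible; cbn. rewrite paste_inv_square. unfold ev_square.
  rewrite vassoc, vinv_r, vid_l. reflexivity.
Qed.

(* Compatibility of [coev] is forced by the triangle identity [ev_coev], applied in both
   components, and injectivity of whiskering. *)
Lemma compatible_coev {X Y} (f : Square X Y) :
  compatible (square_unit Y) (square_comp f (square_inv f)) (coev (side1 f)) (coev (side2 f)).
Proof.
  set (x := transport (square_unit Y) (square_comp f (square_inv f)) (coev (side1 f))).
  assert (Hx : compatible (square_unit Y) (square_comp f (square_inv f)) (coev (side1 f)) x)
    by apply transport_compatible.
  assert (Z := compatible_vcomp _ _ _ _ _ _ _
    (compatible_vcomp _ _ _ _ _ _ _
      (compatible_vcomp _ _ _ _ _ _ _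
        (compatible_hcomp _ _ _ _ _ _ _ _ (compatible_id f) Hx) (compatible_ass f (square_inv f) f))
      (compatible_hcomp _ _ _ _ _ _ _ _ (compatible_ev f) (compatible_id f)))
    (compatible_run f)).
  cbn in Z. rewrite (ev_coev (side1 f)) in Z.
  assert (E := compatible_unique _ _ _ _ _ Z (compatible_lun f)).
  rewrite <- (ev_coev (side2 f)) in E.
  apply vcancel_l, vcancel_l, vcancel_l, whisker_r_inj in E.
  rewrite <- E. exact Hx.
Qed.

Lemma compatible_inv2 {X Y} (f g : Square X Y) a1 a2 :
  compatible f g a1 a2 -> compatible (square_inv f) (square_inv g) (inv2 a1) (inv2 a2).
Proof.
  intro H.
  set (z := vinv (id2 (path X) ⋆ inv2 a2) ∘ (inv_square_cell g ∘ (inv2 a1 ⋆ id2 (path Y)))).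
  set (f' := @mkSquare Y X (inv1 (side1 f)) (inv1 (side2 f)) z).
  assert (H1 : compatible f' (square_inv g) (inv2 a1) (inv2 a2)).
  { unfold compatible; cbn. unfold z. rewrite vassoc, vinv_r, vid_l. reflexivity. }
  assert (H2 := compatible_vcomp _ _ _ _ _ _ _
    (compatible_hcomp _ _ _ _ _ _ _ _ H H1) (compatible_ev g)).
  cbn in H2. rewrite (ev_nat a1), (ev_nat a2) in H2.
  unfold compatible in H2; cbn in H2.
  assert (E : paste z (square_cell f) = paste (inv_square_cell f) (square_cell f)).
  { rewrite paste_inv_square. unfold ev_square. rewrite H2, vassoc, vinv_l, vid_l. reflexivity. }
  apply paste_inj_l in E.
  unfold compatible; cbn. rewrite <- E. exact H1.
Qed.

Lemma transport_id {X Y} (f : Square X Y) : transport f f (id2 (side1 f)) = id2 (side2 f).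
Proof. apply transport_unique, compatible_id. Qed.

Lemma transport_vcomp {X Y} (f g h : Square X Y) a b :
  transport f h (b ∘ a) = transport g h b ∘ transport f g a.
Proof. apply transport_unique, compatible_vcomp; apply transport_compatible. Qed.

Lemma transport_hcomp {X Y Z} (g g' : Square Y Z) (f f' : Square X Y) b a :
  transport (square_comp g f) (square_comp g' f') (b ⋆ a) = transport g g' b ⋆ transport f f' a.
Proof. apply transport_unique, compatible_hcomp; apply transport_compatible. Qed.

Lemma transport_inv2 {X Y} (f g : Square X Y) a :
  transport (square_inv f) (square_inv g) (inv2 a) = inv2 (transport f g a).
Proof. apply transport_unique, compatible_inv2, transport_compatible. Qed.

Lemma transport_ass {X Y Z W} (h : Square Z W) (g : Square Y Z) (f : Square X Y) :
  transport (square_comp (square_comp h g) f) (square_comp h (square_comp g f))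
    (ass (side1 h) (side1 g) (side1 f)) = ass (side2 h) (side2 g) (side2 f).
Proof. apply transport_unique, compatible_ass. Qed.

Lemma transport_lun {X Y} (f : Square X Y) :
  transport (square_comp (square_unit Y) f) f (lun (side1 f)) = lun (side2 f).
Proof. apply transport_unique, compatible_lun. Qed.

Lemma transport_run {X Y} (f : Square X Y) :
  transport (square_comp f (square_unit X)) f (run (side1 f)) = run (side2 f).
Proof. apply transport_unique, compatible_run. Qed.

Lemma transport_ev {X Y} (f : Square X Y) :
  transport (square_comp (square_inv f) f) (square_unit X) (ev (side1 f)) = ev (side2 f).
Proof. apply transport_unique, compatible_ev. Qed.

Lemma transport_coev {X Y} (f : Square X Y) :
  transport (square_unit Y) (square_comp f (square_inv f)) (coev (side1 f)) = coev (side2 f).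
Proof. apply transport_unique, compatible_coev. Qed.

Definition PathBG : Bigroupoid := {|
  C0 := Path0; C1 := Square; C2 := fun X Y f g => @C2 B _ _ (side1 f) (side1 g);
  vcomp := fun X Y f g h b a => b ∘ a;
  id2 := fun X Y f => id2 (side1 f);
  vinv := fun X Y f g a => vinv a;
  vassoc := fun X Y f g h k c b a => vassoc c b a;
  vid_l := fun X Y f g a => vid_l a; vid_r := fun X Y f g a => vid_r a;
  vinv_l := fun X Y f g a => vinv_l a; vinv_r := fun X Y f g a => vinv_r a;
  comp1 := @square_comp; hcomp := fun X Y Z g g' f f' b a => b ⋆ a;
  hcomp_id := fun X Y Z g f => hcomp_id (side1 g) (side1 f);
  hcomp_vcomp := fun X Y Z g g' g'' f f' f'' b' b a' a => hcomp_vcomp b' b a' a;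
  unit1 := square_unit; inv1 := @square_inv; inv2 := fun X Y f g a => inv2 a;
  inv2_id := fun X Y f => inv2_id (side1 f);
  inv2_vcomp := fun X Y f g h b a => inv2_vcomp b a;
  ass := fun X Y Z W h g f => ass (side1 h) (side1 g) (side1 f);
  ass_nat := fun X Y Z W h h' g g' f f' c b a => ass_nat c b a;
  lun := fun X Y f => lun (side1 f); lun_nat := fun X Y f f' a => lun_nat a;
  run := fun X Y f => run (side1 f); run_nat := fun X Y f f' a => run_nat a;
  ev := fun X Y f => ev (side1 f); ev_nat := fun X Y f f' a => ev_nat a;
  coev := fun X Y f => coev (side1 f); coev_nat := fun X Y f f' a => coev_nat a;
  pentagon := fun X Y Z W V k h g f => pentagon (side1 k) (side1 h) (side1 g) (side1 f);
  triangle := fun X Y Z g f => triangle (side1 g) (side1 f);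
  ev_coev := fun X Y f => ev_coev (side1 f) |}.

Definition endpoints_data : MorphData PathBG (ProdBG B B) :=
  @mkMorphData PathBG (ProdBG B B) (fun X => (pt1 X, pt2 X))
    (fun X Y f => (side1 f, side2 f))
    (fun X Y f g a => (a, transport f g a))
    (fun X Y Z g f => (id2 (comp1 (side1 g) (side1 f)), id2 (comp1 (side2 g) (side2 f))))
    (fun X => (id2 (unit1 (pt1 X)), id2 (unit1 (pt2 X))))
    (fun X Y f => (id2 (inv1 (side1 f)), id2 (inv1 (side2 f)))).

Lemma endpoints_laws : IsMorph endpoints_data.
Proof.
  split; intros; cbn; unfold pvcomp, phcomp, pid2, pinv2, pass, prun, plun, pev, pcoev; cbn;
    f_equal;
    rewrite ?transport_id, ?transport_vcomp, ?transport_hcomp, ?transport_inv2, ?transport_ass,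
      ?transport_run, ?transport_lun, ?transport_ev, ?transport_coev, ?hcomp_id, ?vid_l, ?vid_r;
    reflexivity.
Qed.

Definition endpoints : Morph PathBG (ProdBG B B) := mkMorph endpoints_data endpoints_laws.

Definition const_square {A A'} (f : @C1 B A A') : C2 (comp1 f (unit1 A)) (comp1 (unit1 A') f) :=
  vinv (lun f) ∘ run f.

Definition const_path1 {A A'} (f : @C1 B A A') :
  Square (mkPath0 A A (unit1 A)) (mkPath0 A' A' (unit1 A')) :=
  @mkSquare (mkPath0 A A (unit1 A)) (mkPath0 A' A' (unit1 A')) f f (const_square f).

Definition const_data : MorphData B PathBG :=
  @mkMorphData B PathBG (fun A => mkPath0 A A (unit1 A)) (fun A A' f => const_path1 f)
    (fun A A' f g a => a) (fun A A' A'' g f => id2 (comp1 g f)) (fun A => id2 (unit1 A))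
    (fun A A' f => id2 (inv1 f)).

Lemma const_laws : IsMorph const_data.
Proof. split; intros; cbn; rewrite ?hcomp_id, ?vid_l, ?vid_r; reflexivity. Qed.

Definition const : Morph B PathBG := mkMorph const_data const_laws.

Lemma paste_const_square {A A' A''} (g : @C1 B A' A'') (f : C1 A A') :
  paste (const_square g) (const_square f) = const_square (comp1 g f).
Proof.
  unfold paste, const_square. rewrite (hcomp_vl f), (hcomp_vr g). vassoc_right.
  assert (T1 : (run g ⋆ id2 f) ∘ vinv (ass g (unit1 A') f) = id2 g ⋆ lun f).
  { rewrite <- triangle, <- vassoc, vinv_r, vid_r. reflexivity. }
  rewrite (vassoc (run g ⋆ id2 f)), T1.
  rewrite (vassoc (id2 g ⋆ lun f)), <- hcomp_vr, vinv_r, hcomp_id, vid_l, <- (run_comp1 g f).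
  assert (T2 : ass (unit1 A'') g f ∘ (vinv (lun g) ⋆ id2 f) = vinv (lun (comp1 g f))).
  { rewrite <- vinv_whisker_r, <- lun_comp1, vinv_vcomp, vassoc, vinv_r, vid_l. reflexivity. }
  rewrite vassoc, T2. reflexivity.
Qed.

Lemma const_square_nat {A A'} (f g : @C1 B A A') (a : C2 f g) :
  const_square g ∘ (a ⋆ id2 (unit1 A)) = (id2 (unit1 A') ⋆ a) ∘ const_square f.
Proof.
  unfold const_square. rewrite <- vassoc, run_nat, !vassoc.
  f_equal. apply vinv_naturality, lun_nat.
Qed.

Lemma id_square_unit1 (A : C0 B) : id_square (unit1 A) = const_square (unit1 A).
Proof. unfold id_square, const_square. rewrite lun_unit1. reflexivity. Qed.

Lemma inv_square_cell_const {A A'} (f : @C1 B A A') :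
  inv_square_cell (const_path1 f) = const_square (inv1 f).
Proof.
  apply (paste_inj_l _ _ (const_square f)).
  transitivity (const_square (comp1 (inv1 f) f)); [|symmetry; apply paste_const_square].
  etransitivity; [exact (paste_inv_square (const_path1 f))|]. unfold ev_square; cbn. rewrite id_square_unit1.
  unfold const_square. rewrite lun_unit1, vinv_l, vid_l.
  apply (vcancel_l _ _ (id2 (unit1 A) ⋆ ev f)).
  rewrite vassoc, vinv_r, vid_l, vassoc, <- (vinv_naturality _ _ _ _ (lun_nat (ev f))), lun_unit1.
  apply (vcancel_l _ _ (run (unit1 A))).
  rewrite run_nat, !vassoc, vinv_r, vid_l. reflexivity.
Qed.

Lemma endpoints_const_data : mcomp_data endpoints_data const_data = diag_data B.
Proof.
  unfold mcomp_data, diag_data. cbn. f_equal.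
  all: repeat (apply functional_extensionality_dep; intro).
  all: cbn; unfold pvcomp; cbn.
  - f_equal. apply transport_unique, const_square_nat.
  - rewrite vid_l, vid_r. f_equal. apply transport_unique. unfold compatible; cbn.
    rewrite !hcomp_id, vid_l, vid_r. symmetry. apply paste_const_square.
  - rewrite vid_l, vid_r. f_equal. apply transport_unique. unfold compatible; cbn.
    rewrite !hcomp_id, vid_l, vid_r. symmetry. apply id_square_unit1.
  - rewrite vid_l, vid_r. f_equal. apply transport_unique. unfold compatible; cbn.
    rewrite !hcomp_id, vid_l, vid_r. symmetry. apply inv_square_cell_const.
Qed.

End PathObject.

Lemma Morph_eq {B C : Bigroupoid} (F G : Morph B C) : mdata F = mdata G -> F = G.
Proof.
  destruct F as [F HF], G as [G HG]; cbn; intro E; subst. f_equal. apply proof_irrelevance.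
Qed.

Lemma endpoints_const (B : Bigroupoid) : mcomp endpoints const = diag B.
Proof. apply Morph_eq, endpoints_const_data. Qed.

Lemma const_weak_equivalence (B : Bigroupoid) : weak_equivalence (@const B).
Proof.
  split.
  - intro X. exists (pt1 X). constructor.
    exact (@mkSquare B X (mkPath0 (pt1 X) (pt1 X) (unit1 _)) (unit1 (pt1 X)) (path X) (id2 _)).
  - intros A A'. exists (fun x => side1 x), (fun x y a => a).
    split; [|split; [|split]]; cbn; try reflexivity.
    + exists (fun a => id2 a). intros; cbn. rewrite vid_l, vid_r. reflexivity.
    + exists (fun x => id2 (side1 x)). intros; cbn. rewrite vid_l, vid_r. reflexivity.
Qed.

Lemma endpoints_fibration (B : Bigroupoid) : fibration (@endpoints B).
Proof.
  split.
  - intros A' [X1 X2] [b1 b2]. cbn in b1, b2.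
    set (w := comp1 (path A') b2).
    exists (mkPath0 X1 X2 (comp1 (inv1 b1) w)).
    exists (@mkSquare B (mkPath0 X1 X2 (comp1 (inv1 b1) w)) A' b1 b2
      (lun w ∘ ((vinv (coev b1) ⋆ id2 w) ∘ vinv (ass b1 (inv1 b1) w)))).
    reflexivity.
  - intros A A' a' [b1 b2] [be1 be2]; cbn in *.
    exists (@mkSquare B A A' b1 b2
      (vinv (id2 (path A') ⋆ be2) ∘ (square_cell a' ∘ (be1 ⋆ id2 (path A))))).
    exists be1. cbn. do 2 f_equal.
    apply transport_unique. unfold compatible; cbn.
    rewrite vassoc, vinv_r, vid_l. reflexivity.
Qed.

Theorem lemma5p11 (B : Bigroupoid) :
  exists (PB : Bigroupoid) (R : Morph B PB) (ST : Morph PB (ProdBG B B)),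
    mcomp ST R = diag B /\ weak_equivalence R /\ fibration ST.
Proof.
  exists PathBG, const, endpoints.
  split; [|split].
  - apply endpoints_const.
  - apply const_weak_equivalence.
  - apply endpoints_fibration.
Qed.
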